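(* Let $(x,y,z)$ be positive integers with $x<y$ satisfying $$(x-1)x(x+1)(y-1)y(y+1)=(z-1)z(z+1),$$ and put $k=y-x$. Then either $(x,y,z)=(F_{2n-1},F_{2n+1},F_{2n}^2)$ for some integer $n\ge1$, or $$1\le x\le -\tfrac12k+\tfrac12\sqrt{3k^2+2k\sqrt{k^2+4}+4}.$$
   Context: $F_m$ denotes the $m$-th Fibonacci number: $F_0=0$, $F_1=1$, $F_{m+1}=F_m+F_{m-1}$. *)

From Stdlib Require Import Reals ZArith.

Fixpoint fib (m : nat) : nat :=
  match m with
  | O => 0
  | S m' => match m' with
            | O => 1
            | S m'' => fib m' + fib m''
            end
  end.

(* Write z = xy - d.  Expanding the equation gives
     d (3 (xy)^2 - 3 (xy) d + d^2 - 1) = xy (x^2 + y^2 - 2),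
   so the "defect" d is positive.  If d = 1 the equation becomes the Markov-type
   equation x^2 + y^2 + 1 = 3xy, whose solutions with x < y are pairs of consecutive
   odd-indexed Fibonacci numbers (Vieta jumping), and then z = xy - 1 = F_{2n}^2 by
   Cassini's identity.  If d >= 2, the left side is at least its value at d = 2, which
   forces x^2 + y^2 > 6xy - 10; with y = x + k this bounds x^2 + kx by k^2 + 1, which
   is the stated quadratic bound on x. *)

From Stdlib Require Import Reals ZArith Lia Lra.

Lemma cubic_product_defect_eq (X Y D : Z) :
  ((X - 1) * X * (X + 1) * ((Y - 1) * Y * (Y + 1))
     = (X * Y - D - 1) * (X * Y - D) * (X * Y - D + 1)
   <-> D * (3 * (X * Y) ^ 2 - 3 * (X * Y) * D + D ^ 2 - 1)
       = X * Y * (X ^ 2 + Y ^ 2 - 2))%Z.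
Proof. split; intro E; lia. Qed.

Section Defect.

Variables X Y D : Z.
Hypothesis X_pos : (1 <= X)%Z.
Hypothesis X_lt_Y : (X < Y)%Z.
Hypothesis D_lt_XY : (D < X * Y)%Z.
Hypothesis defect_eq :
  (D * (3 * (X * Y) ^ 2 - 3 * (X * Y) * D + D ^ 2 - 1) = X * Y * (X ^ 2 + Y ^ 2 - 2))%Z.

Let P := (X * Y)%Z.

Let P_ge2 : (2 <= P)%Z.
Proof. unfold P; nia. Qed.

Let rhs_pos : (0 < P * (X ^ 2 + Y ^ 2 - 2))%Z.
Proof. apply Z.mul_pos_pos; nia. Qed.

Lemma defect_pos : (1 <= D)%Z.
Proof.
  destruct (Z_lt_le_dec D 1) as [D_le0 | ]; [exfalso | lia].
  assert (0 < 3 * P ^ 2 - 3 * P * D + D ^ 2 - 1)%Z by nia.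
  assert (D * (3 * P ^ 2 - 3 * P * D + D ^ 2 - 1) <= 0)%Z
    by (apply Z.mul_nonpos_nonneg; lia).
  fold P in defect_eq; lia.
Qed.

Lemma defect_one_markov : D = 1%Z -> (X * X + Y * Y + 1 = 3 * X * Y)%Z.
Proof.
  intros ->. fold P in defect_eq.
  assert (P_factor : (P * (3 * P - 1 - X ^ 2 - Y ^ 2) = 0)%Z) by lia.
  apply Z.mul_eq_0 in P_factor as [|]; unfold P in *; lia.
Qed.

Lemma defect_ge2_close : (2 <= D)%Z ->
  (X * X + X * (Y - X) <= (Y - X) * (Y - X) + 1)%Z.
Proof.
  intros D_ge2. fold P in defect_eq.
  (* the left side of [defect_eq] minus its value at [D = 2] is [D - 2] times this *)
  assert (0 <= 3 * P ^ 2 - 3 * P * (D + 2) + D ^ 2 + 2 * D + 3)%Z.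
  { replace D with (P - (P - D))%Z by lia. nia. }
  assert (6 * (P - 1) ^ 2 <= P * (X ^ 2 + Y ^ 2 - 2))%Z by nia.
  assert (sum_sq_gt : (6 * P - 12 < X ^ 2 + Y ^ 2 - 2)%Z).
  { destruct (Z_le_gt_dec (X ^ 2 + Y ^ 2 - 2) (6 * P - 12)) as [Hle|]; [|lia].
    apply (Z.mul_le_mono_nonneg_l _ _ P) in Hle; lia. }
  unfold P in sum_sq_gt. replace Y with (X + (Y - X))%Z in sum_sq_gt by ring.
  set (K := (Y - X)%Z) in *.
  assert (K_pos : (1 <= K)%Z) by (unfold K; lia).
  clear - X_pos K_pos sum_sq_gt.
  destruct (Z.eq_dec K 1) as [-> | ]; [lia|].
  assert (4 <= K * K)%Z by nia. lia.
Qed.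

End Defect.

Lemma markov_or_close (x y z : Z) :
  (1 <= x)%Z -> (x < y)%Z -> (1 <= z)%Z ->
  ((x - 1) * x * (x + 1) * ((y - 1) * y * (y + 1)) = (z - 1) * z * (z + 1))%Z ->
  (z = x * y - 1 /\ x * x + y * y + 1 = 3 * x * y)%Z
  \/ (x * x + x * (y - x) <= (y - x) * (y - x) + 1)%Z.
Proof.
  intros x_pos x_lt_y z_pos E.
  set (d := (x * y - z)%Z).
  replace z with (x * y - d)%Z in E by (unfold d; lia).
  apply cubic_product_defect_eq in E.
  assert (d_lt : (d < x * y)%Z) by (unfold d; lia).
  pose proof (defect_pos x y d x_pos x_lt_y d_lt E).
  destruct (Z.eq_dec d 1) as [d1 | d_ne1]; [left | right].
  - pose proof (defect_one_markov x y d x_pos x_lt_y d_lt E d1).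
    split; unfold d in d1; lia.
  - exact (defect_ge2_close x y d x_pos x_lt_y d_lt E ltac:(lia)).
Qed.

Lemma fib_SS m : fib (S (S m)) = fib (S m) + fib m.
Proof. reflexivity. Qed.

Lemma fib_add4 m : fib (m + 4) + fib m = 3 * fib (m + 2).
Proof.
  replace (m + 4) with (S (S (S (S m)))) by lia.
  replace (m + 2) with (S (S m)) by lia.
  rewrite !fib_SS; lia.
Qed.

Lemma fib_cassini m :
  (Z.of_nat (fib m) * Z.of_nat (fib (S (S m))) - Z.of_nat (fib (S m)) ^ 2
   = (-1) ^ Z.of_nat (S m))%Z.
Proof.
  induction m as [|m IH]; [reflexivity|].
  rewrite Nat2Z.inj_succ, Z.pow_succ_r, <- IH by lia.
  rewrite !fib_SS, !Nat2Z.inj_add. ring.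
Qed.

Lemma fib_odd_cassini n :
  1 <= n -> fib (2 * n - 1) * fib (2 * n + 1) = fib (2 * n) * fib (2 * n) + 1.
Proof.
  intros n_pos.
  pose proof (fib_cassini (2 * n - 1)) as C.
  replace (S (S (2 * n - 1))) with (2 * n + 1) in C by lia.
  replace (S (2 * n - 1)) with (2 * n) in C by lia.
  rewrite Nat2Z.inj_mul, Z.pow_mul_r in C by lia.
  change ((-1) ^ Z.of_nat 2)%Z with 1%Z in C. rewrite Z.pow_1_l in C by lia.
  apply Nat2Z.inj. rewrite Nat2Z.inj_add, !Nat2Z.inj_mul. lia.
Qed.

Lemma markov_vieta_jump x y :
  1 < x < y -> x * x + y * y + 1 = 3 * x * y ->
  exists w, 0 < w < x /\ y + w = 3 * x /\ w * w + x * x + 1 = 3 * w * x.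
Proof.
  intros [x_gt1 x_lt_y] E.
  assert (y * y < 3 * x * y) by lia.
  exists (3 * x - y).
  set (w := 3 * x - y). assert (y + w = 3 * x) by (unfold w; nia).
  assert (w * y = x * x + 1) by nia.
  assert (0 < w) by (destruct w; nia).
  assert (w < x) by nia.
  repeat split; nia.
Qed.

Lemma markov_odd_fib x y :
  0 < x < y -> x * x + y * y + 1 = 3 * x * y ->
  exists n, 1 <= n /\ x = fib (2 * n - 1) /\ y = fib (2 * n + 1).
Proof.
  revert y. induction x as [x IH] using lt_wf_ind. intros y x_range E.
  destruct (Nat.eq_dec x 1) as [-> | x_ne1].
  - exists 1. assert (y = 2) by nia. subst y. auto.
  - destruct (markov_vieta_jump x y ltac:(lia) E) as [w [w_range [y_w Ew]]].
    destruct (IH w ltac:(lia) x ltac:(lia) Ew) as [n [n_pos [w_fib x_fib]]].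
    exists (S n). split; [lia|]. split.
    + replace (2 * S n - 1) with (2 * n + 1) by lia. exact x_fib.
    + pose proof (fib_add4 (2 * n - 1)) as F.
      replace (2 * n - 1 + 2) with (2 * n + 1) in F by lia.
      replace (2 * n - 1 + 4) with (2 * S n + 1) in F by lia.
      lia.
Qed.

Lemma INR_le_vertex_bound (x k : nat) :
  x * x + x * k <= k * k + 1 ->
  (INR x <= - (1/2) * INR k
             + (1/2) * sqrt (3 * INR k ^ 2 + 2 * INR k * sqrt (INR k ^ 2 + 4) + 4))%R.
Proof.
  intros H. apply le_INR in H. rewrite !plus_INR, !mult_INR in H.
  set (xr := INR x) in *. set (kr := INR k) in *. simpl (INR 1) in H.
  assert (kr_nonneg : (0 <= kr)%R) by apply pos_INR.
  assert (xr_nonneg : (0 <= xr)%R) by apply pos_INR.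
  assert (kr_le_sqrt : (kr <= sqrt (kr ^ 2 + 4))%R).
  { rewrite <- (sqrt_pow2 kr kr_nonneg) at 1. apply sqrt_le_1_alt. lra. }
  (* [(2x + k)^2 <= 5k^2 + 4 <= 3k^2 + 2k sqrt(k^2 + 4) + 4] *)
  assert (2 * xr + kr <= sqrt (3 * kr ^ 2 + 2 * kr * sqrt (kr ^ 2 + 4) + 4))%R.
  { rewrite <- (sqrt_pow2 (2 * xr + kr)) by lra. apply sqrt_le_1_alt.
    assert (kr * kr <= kr * sqrt (kr ^ 2 + 4))%R by (apply Rmult_le_compat_l; lra).
    nra. }
  lra.
Qed.

Theorem theorem6 (x y z : nat) :
  (0 < x)%nat -> (0 < y)%nat -> (0 < z)%nat -> (x < y)%nat ->
  ((Z.of_nat x - 1) * Z.of_nat x * (Z.of_nat x + 1) *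
   ((Z.of_nat y - 1) * Z.of_nat y * (Z.of_nat y + 1))
   = (Z.of_nat z - 1) * Z.of_nat z * (Z.of_nat z + 1))%Z ->
  let k := INR (y - x) in
  (exists n : nat, (1 <= n)%nat /\
     x = fib (2 * n - 1) /\ y = fib (2 * n + 1) /\ z = fib (2 * n) ^ 2)
  \/
  (1 <= INR x <= - (1/2) * k + (1/2) * sqrt (3 * k ^ 2 + 2 * k * sqrt (k ^ 2 + 4) + 4))%R.
Proof.
  intros x_pos y_pos z_pos x_lt_y E k.
  destruct (markov_or_close (Z.of_nat x) (Z.of_nat y) (Z.of_nat z)
              ltac:(lia) ltac:(lia) ltac:(lia) E) as [[z_eq markov] | close].
  - left.
    destruct (markov_odd_fib x y ltac:(lia) ltac:(lia)) as [n [n_pos [-> ->]]].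
    exists n. repeat split; try assumption.
    pose proof (fib_odd_cassini n n_pos). rewrite Nat.pow_2_r. lia.
  - right. split.
    + apply (le_INR 1). exact x_pos.
    + apply INR_le_vertex_bound.
      rewrite <- Nat2Z.inj_sub in close by lia. lia.
Qed.
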